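(* Let $X_1,\dots,X_n$ be independent real-valued integrable random variables and define constants $\lambda_0=0$, $\lambda_k=\mathbb E\sqrt{X_k^2+\lambda_{k-1}^2}$ for $k=1,\dots,n$. Then $$\lambda_n\le\mathbb E\Big(\sum_{k=1}^nX_k^2\Big)^{1/2}\le2\lambda_n .$$ *)

From HB Require Import structures.
From mathcomp Require Import all_boot all_order all_algebra.
From mathcomp Require Import all_classical all_reals all_analysis.
Set Implicit Arguments. Unset Strict Implicit. Unset Printing Implicit Defensive.
Import Order.TTheory GRing.Theory Num.Theory.
Local Open Scope classical_set_scope.
Local Open Scope ring_scope.

(* Random variables are indexed by nat; only indices 1..n are used. *)

Definition mutually_independent {d} {T : measurableType d} {R : realType}
  (P : probability T R) (n : nat) (X : nat -> T -> R) : Prop :=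
  forall (B : nat -> set R), (forall k, measurable (B k)) ->
  forall J : seq nat, uniq J -> all (fun k => (1 <= k <= n)%N) J ->
    P (\big[setI/setT]_(k <- J) (X k @^-1` B k)) =
    (\prod_(k <- J) P (X k @^-1` B k))%E.

Fixpoint lam {d} {T : measurableType d} {R : realType}
  (P : probability T R) (X : nat -> T -> R) (k : nat) : R :=
  match k with
  | 0 => 0
  | k'.+1 => fine (\int[P]_x (Num.sqrt (X k'.+1 x ^+ 2 + lam P X k' ^+ 2))%:E)
  end.

From HB Require Import structures.
From mathcomp Require Import all_boot all_order all_algebra.
From mathcomp Require Import all_classical all_reals all_analysis.
From mathcomp Require Import measurable_realfun ring lra.
Import Order.TTheory GRing.Theory Num.Theory.
Import numFieldTopology.Exports numFieldNormedType.Exports.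
Local Open Scope classical_set_scope.
Local Open Scope ring_scope.
Set Implicit Arguments. Unset Strict Implicit. Unset Printing Implicit Defensive.

(* Write Y_k = (X_1^2 + ... + X_k^2)^(1/2) and M_k = hypot (X_k, lam_(k-1)), so that
   Y_k = hypot (X_k, Y_(k-1)) and lam_k = E M_k.

   Upper bound (no independence needed): y |-> hypot (x, y) is monotone and
   1-Lipschitz on [0, oo), so by induction Y_k <= lam_k + sum_(j <= k) (M_j - lam_(j-1))
   pointwise, using lam_(k-1) <= lam_k; the sum telescopes to lam_k in expectation.

   Lower bound: convexity of y |-> hypot (x, y) gives the tangent inequality
   Y_k >= M_k + V_k (Y_(k-1) - lam_(k-1)) with V_k = lam_(k-1) / M_k, a [0, 1]-valued
   function of X_k. By induction on k, lam_k P(A) <= E[Y_k; A] for every event A of the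
   form {X_j in B_j for j in J} with J a set of indices above k. For such A, independence
   gives E[M_k; A] = lam_k P(A), and E[V_k (Y_(k-1) - lam_(k-1)); A] >= 0 because V_k is a
   uniform limit of nonnegative combinations of indicators of its superlevel sets, while
   A meets each superlevel set of V_k in another such event, where the induction
   hypothesis applies. Taking A the whole space gives lam_n <= E Y_n. *)


Definition hypot {R : rcfType} (x y : R) : R := Num.sqrt (x ^+ 2 + y ^+ 2).

Section hypot.
Variable R : rcfType.
Implicit Types x y a b l : R.

Lemma hypot_ge0 x y : 0 <= hypot x y.
Proof. exact: sqrtr_ge0. Qed.

Lemma sqr_hypot x y : hypot x y ^+ 2 = x ^+ 2 + y ^+ 2.
Proof. by rewrite sqr_sqrtr // addr_ge0 ?sqr_ge0. Qed.

Lemma hypot_le x y c : 0 <= c -> x ^+ 2 + y ^+ 2 <= c ^+ 2 -> hypot x y <= c.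
Proof.
move=> c0 h; rewrite -(ger0_norm c0) -sqrtr_sqr ler_sqrt //; exact: sqr_ge0.
Qed.

Lemma ler_hypotr x y : 0 <= y -> y <= hypot x y.
Proof.
move=> y0; rewrite -[leLHS](ger0_norm y0) -sqrtr_sqr ler_sqrt ?lerDr ?sqr_ge0 //.
by rewrite addr_ge0 ?sqr_ge0.
Qed.

Lemma hypot_le_addr x y a b : 0 <= y -> 0 <= a -> 0 <= b -> y <= a + b ->
  hypot x y <= hypot x a + b.
Proof.
move=> y0 a0 b0 yab; have s0 := hypot_ge0 x a; have ss := sqr_hypot x a.
have sa := @ler_hypotr x a a0.
apply: hypot_le; [exact: addr_ge0 | nra].
Qed.

Lemma hypot_tangent x y l : 0 <= l -> 0 <= y ->
  hypot x l + l / hypot x l * (y - l) <= hypot x y.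
Proof.
move=> l0 y0; set m := hypot x l; set q := hypot x y.
have [->|m_neq0] := eqVneq m 0; first by rewrite invr0 mulr0 mul0r addr0 hypot_ge0.
have m_gt0 : 0 < m by rewrite lt_def m_neq0 hypot_ge0.
have mm := sqr_hypot x l; have qq := sqr_hypot x y; have q0 := hypot_ge0 x y.
have -> : m + l / m * (y - l) = (x ^+ 2 + l * y) / m.
  by apply: (@mulIf _ m) => //; rewrite mulfVK // mulrDl mulrAC divfK // -expr2 mm; ring.
rewrite ler_pdivrMr //.
have qm0 : 0 <= q * m := mulr_ge0 q0 (ltW m_gt0).
have : (x ^+ 2 + l * y) ^+ 2 <= (q * m) ^+ 2.
  rewrite exprMn qq mm -subr_ge0.
  suff -> : (x ^+ 2 + y ^+ 2) * (x ^+ 2 + l ^+ 2) - (x ^+ 2 + l * y) ^+ 2 =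
            (x * (y - l)) ^+ 2 by exact: sqr_ge0.
  ring.
nra.
Qed.

Lemma hypot_slope_ge0 y l : 0 <= l -> 0 <= l / hypot y l.
Proof. by move=> l0; rewrite divr_ge0 ?hypot_ge0. Qed.

Lemma hypot_slope_le1 y l : 0 <= l -> l / hypot y l <= 1.
Proof.
move=> l0; have [->|h_neq0] := eqVneq (hypot y l) 0; first by rewrite invr0 mulr0 ler01.
by rewrite ler_pdivrMr ?mul1r ?ler_hypotr // lt_def h_neq0 hypot_ge0.
Qed.

End hypot.

Lemma measurable_hypot d (T : measurableType d) (R : realType) (f g : T -> R) :
  measurable_fun setT f -> measurable_fun setT g ->
  measurable_fun setT (fun x => hypot (f x) (g x)).
Proof.
move=> mf mg; apply: measurableT_comp.
  exact: continuous_measurable_fun (@sqrt_continuous R).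
by apply: measurable_funD; exact: measurable_funX.
Qed.

Lemma measurable_hypot_slope (R : realType) (l : R) :
  measurable_fun setT (fun y : R => l / hypot y l).
Proof.
have [->|l_neq0] := eqVneq l 0.
  by under eq_fun do rewrite mul0r; exact: measurable_cst.
apply: continuous_measurable_fun => y.
have hyp_neq0 : hypot y l != 0.
  by rewrite sqrtr_eq0 -ltNge ltr_wpDl ?sqr_ge0 // exprn_even_gt0.
have sq : {for y, continuous (fun z : R => z ^+ 2 + l ^+ 2)}.
  have cid : {for y, continuous (fun z : R => z)} by move=> ?; exact: cvg_id.
  have := continuousD (continuousM cid cid) (@cst_continuous R R (l ^+ 2) y).
  by move=> c ?; under eq_fun do rewrite expr2; exact: c.
have := @continuousV _ _ (fun z => hypot z l) y hyp_neq0
  (continuous_comp sq (@sqrt_continuous R _)).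
exact: continuousM (@cst_continuous R R l y).
Qed.

Section staircase.
Variable R : realFieldType.

Definition staircase (N : nat) (v : R) : R :=
  N%:R^-1 * \sum_(i < N) ((i.+1%:R / N%:R <= v)%R : bool)%:R.

Lemma count_nat_le_bounds (N : nat) (a : R) : 0 <= a <= N%:R ->
  \sum_(i < N) ((i.+1%:R <= a)%R : bool)%:R <= a <=
  \sum_(i < N) ((i.+1%:R <= a)%R : bool)%:R + 1.
Proof.
elim: N a => [|N IH] a /andP[a0 aN]; first by rewrite big_ord0 add0r a0 (le_trans aN) ?ler01.
rewrite big_ord_recl /=.
under eq_bigr => i _ do rewrite /bump /= add1n -natr1 -lerBrDr.
have [a1|a1] := lerP 1 a.
  have := IH (a - 1); rewrite subr_ge0 a1 lerBlDr natr1 aN => /(_ isT).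
  by move=> /andP[h1 h2]; rewrite /= mulr1n; apply/andP; split; lra.
rewrite big1 => [|i _]; last first.
  by apply/eqP; rewrite pnatr_eq0 eqb0 -ltNge (lt_le_trans _ (ler0n _ _)) // subr_lt0.
by rewrite /= mulr0n !add0r a0 ltW.
Qed.

Lemma staircase_bounds (N : nat) (v : R) : (0 < N)%N -> 0 <= v <= 1 ->
  0 <= staircase N v <= v /\ v - N%:R^-1 <= staircase N v.
Proof.
move=> N0 /andP[v0 v1]; have N0' : 0 < N%:R :> R by rewrite ltr0n.
have := @count_nat_le_bounds N (N%:R * v).
rewrite mulr_ge0 ?ler0n //= ler_piMr ?ler0n // => /(_ isT) /andP[].
under eq_bigr => i _ do rewrite -ler_pdivrMl // mulrC.
rewrite /staircase; set S := \sum_(i < N) _ => hS hS1.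
have S0 : 0 <= S by apply: sumr_ge0 => i _; exact: ler0n.
rewrite mulr_ge0 ?invr_ge0 ?ler0n //; split.
  by rewrite ler_pdivrMl.
have -> : v - N%:R^-1 = N%:R^-1 * (N%:R * v - 1) by field; rewrite gt_eqF.
by rewrite ler_wpM2l ?invr_ge0 ?ler0n // lerBlDr.
Qed.

End staircase.

Lemma ge0_of_ge_oppr_divSn (R : archiFieldType) (C s : R) :
  (forall N : nat, - (C / N.+1%:R) <= s) -> 0 <= s.
Proof.
move=> hs; rewrite leNgt; apply/negP => s_lt0.
have ns_gt0 : 0 < - s by rewrite oppr_gt0.
have := hs (Num.truncn (C / - s)); rewrite lerNl.
set M := (Num.truncn _).+1%:R; have M_gt0 : 0 < M by rewrite ltr0Sn.
rewrite ler_pdivlMr // -ler_pdivlMl // mulrC => /(le_lt_trans)/(_ (truncnS_gt _)).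
by rewrite ltxx.
Qed.

Section integral_lemmas.
Context d (T : measurableType d) (R : realType) (mu : {measure set T -> \bar R}).
Implicit Types (D A : set T).

Lemma integrable_sumr D I (s : seq I) (f : I -> T -> R) : measurable D ->
  (forall i, mu.-integrable D (EFin \o f i)) ->
  mu.-integrable D (EFin \o (fun x => \sum_(i <- s) f i x)).
Proof.
move=> mD fi.
apply: eq_integrable mD _ _ _ (integrable_sum mD s (P:=xpredT) (fun i _ => fi i)).
by move=> x _; rewrite /= sumEFin.
Qed.

Lemma integrable_add D (f g : T -> R) : measurable D ->
  mu.-integrable D (EFin \o f) -> mu.-integrable D (EFin \o g) ->
  mu.-integrable D (EFin \o (fun x => f x + g x)).
Proof.
move=> mD fi gi; apply: eq_integrable mD _ _ _ (integrableD mD fi gi).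
by move=> x _; rewrite /= EFinD.
Qed.

Lemma Rintegral_sum D I (s : seq I) (f : I -> T -> R) : measurable D ->
  (forall i, mu.-integrable D (EFin \o f i)) ->
  \int[mu]_(x in D) \sum_(i <- s) f i x = \sum_(i <- s) \int[mu]_(x in D) f i x.
Proof.
move=> mD fi; rewrite /Rintegral; under eq_integral do rewrite -sumEFin.
rewrite integral_sum // sum_fine // => i _; exact: integrable_fin_num (fi i).
Qed.

Lemma integrable_bounded_mul A (h Z : T -> R) : measurable A ->
  measurable_fun setT h -> (forall x, `|h x| <= 1) ->
  mu.-integrable A (EFin \o Z) -> mu.-integrable A (EFin \o (fun x => h x * Z x)).
Proof.
move=> mA mh h1 iZ; apply: (le_integrable mA _ _ iZ).
  apply/measurable_EFinP; apply: measurable_funM; first exact: measurable_funTS.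
  by apply/measurable_EFinP; exact: measurable_int iZ.
by move=> x _ /=; rewrite lee_fin normrM -[leRHS]mul1r ler_wpM2r.
Qed.

Lemma ge0_integral_mrestr A (f : T -> \bar R) (mA : measurable A) :
  measurable_fun setT f -> (forall x, (0 <= f x)%E) ->
  (\int[mu]_(x in A) f x = \int[mrestr mu mA]_x f x)%E.
Proof.
move=> mf f0.
rewrite [RHS](ge0_negligible_integral (measurableC mA)) //; last first.
  by change (mu (~` A `&` A) = 0); rewrite setICl measure0.
rewrite setTD setCK; apply: eq_measure_integral => B mB BA.
by change (mu B = mu (B `&` A)); rewrite setIidl.
Qed.

End integral_lemmas.

Section finite_measure_lemmas.
Context d (T : measurableType d) (R : realType) (mu : {finite_measure set T -> \bar R}).

Lemma integrableB_cst D (f : T -> R) (c : R) : measurable D ->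
  mu.-integrable D (EFin \o f) -> mu.-integrable D (EFin \o (fun x => f x - c)).
Proof.
move=> mD fi; have := integrableB mD fi (finite_measure_integrable_cst mu c mD).
by apply: eq_integrable => // x _; rewrite /= EFinB.
Qed.

Lemma Rintegral_subr_cst D (f : T -> R) (c : R) : measurable D ->
  mu.-integrable D (EFin \o f) ->
  \int[mu]_(x in D) (f x - c) = \int[mu]_(x in D) f x - c * fine (mu D).
Proof.
move=> mD fi; rewrite RintegralB ?Rintegral_cst //.
exact: finite_measure_integrable_cst.
Qed.

End finite_measure_lemmas.

Lemma ge0_integral_indep_event d (T : measurableType d) (R : realType)
  (P : probability T R) (A : set T) (mA : measurable A) (W : T -> R) (h : R -> \bar R) :
  measurable_fun setT W ->
  (forall B, measurable B -> P (A `&` W @^-1` B) = P A * P (W @^-1` B))%E ->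
  measurable_fun setT h -> (forall y, 0 <= h y)%E ->
  (\int[P]_(x in A) h (W x) = P A * \int[P]_x h (W x))%E.
Proof.
move=> mW AW mh h0.
have pushE (mu : {measure set T -> \bar R}) :
    (\int[mu]_x h (W x) = \int[pushforward mu W]_y h y)%E.
  by rewrite [RHS](ge0_integral_pushforward mW) //= preimage_setT.
have mhW : measurable_fun setT (h \o W) := measurableT_comp mh mW.
rewrite (@ge0_integral_mrestr _ _ _ P A _ mA mhW (fun x => h0 (W x))).
have PAE : P A = (fine (P A))%:E by rewrite fineK // fin_num_measure.
have PA0 : (0 <= fine (P A))%R by rewrite fine_ge0.
rewrite !pushE (eq_measure_integral (mscale (NngNum PA0) (pushforward P W))).
  by rewrite ge0_integral_mscale //= -PAE.
move=> B mB _; change (P (W @^-1` B `&` A) = (fine (P A))%:E * P (W @^-1` B))%E.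
by rewrite -PAE setIC AW.
Qed.

Lemma indic_set_bool T (R : pzRingType) (p : pred T) (x : T) :
  \1_[set y | p y] x = (p x)%:R :> R.
Proof.
by rewrite indicE; case: (boolP (p x)) => px; [rewrite mem_set | rewrite memNset //; exact/negP].
Qed.

Section superlevel_sets.
Context d (T : measurableType d) (R : realType) (mu : {measure set T -> \bar R}).
Variables (A : set T) (V Z : T -> R).
Hypotheses (mA : measurable A) (mV : measurable_fun setT V).
Hypotheses (V01 : forall x, 0 <= V x <= 1) (iZ : mu.-integrable A (EFin \o Z)).
Hypothesis superlevel_ge0 : forall t, 0 <= \int[mu]_(x in A `&` [set x | t <= V x]) Z x.

Lemma measurable_superlevel t : measurable [set x | t <= V x].
Proof.
have -> : [set x | t <= V x] = V @^-1` `[t, +oo[.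
  by apply/seteqP; split => x /=; rewrite in_itv /= andbT.
by rewrite -[X in measurable X]setTI; exact: mV.
Qed.

Let E (N i : nat) := [set x | i.+1%:R / N%:R <= V x].

Let staircase_indic N x : staircase N (V x) = N%:R^-1 * \sum_(i < N) \1_(E N i) x.
Proof. by congr (_ * _); apply: eq_bigr => i _; rewrite indic_set_bool. Qed.

Let measurable_staircase N : measurable_fun setT (fun x => staircase N (V x)).
Proof.
under eq_fun do rewrite staircase_indic.
apply: measurable_funM; first exact: measurable_cst.
by apply: measurable_sum => i; exact/measurable_indic/measurable_superlevel.
Qed.

Let integrable_indic_mul N i : mu.-integrable A (EFin \o (fun x => \1_(E N i) x * Z x)).
Proof.
apply: integrable_bounded_mul => //; first exact/measurable_indic/measurable_superlevel.
by move=> x; rewrite indicE; case: (_ \in _); rewrite ?normr1 ?normr0.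
Qed.

Lemma Rintegral_staircase_mul_ge0 N :
  0 <= \int[mu]_(x in A) (staircase N (V x) * Z x).
Proof.
under eq_Rintegral do rewrite staircase_indic -mulrA mulr_suml.
rewrite RintegralZl //; last exact: integrable_sumr.
rewrite Rintegral_sum // mulr_ge0 ?invr_ge0 ?ler0n // sumr_ge0 // => i _.
suff -> : \int[mu]_(x in A) (\1_(E N i) x * Z x) = \int[mu]_(x in A `&` E N i) Z x.
  exact: superlevel_ge0.
by rewrite Rintegral_mkcondr patch_indic; apply: eq_Rintegral => x _; rewrite /= mulrC.
Qed.

Let integrable_staircase_mul N : (0 < N)%N ->
  mu.-integrable A (EFin \o (fun x => staircase N (V x) * Z x)).
Proof.
move=> N0; apply: integrable_bounded_mul mA (measurable_staircase N) _ iZ => x.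
have [/andP[s0 sv] _] := staircase_bounds N0 (V01 x); have /andP[_ v1] := V01 x.
by rewrite ger0_norm // (le_trans sv).
Qed.

Let integrable_staircase_error_mul N : (0 < N)%N ->
  mu.-integrable A (EFin \o (fun x => (V x - staircase N (V x)) * Z x)).
Proof.
move=> N0; apply: integrable_bounded_mul mA _ _ iZ => [|x].
  exact: measurable_funB mV (measurable_staircase N).
have [/andP[s0 sv] _] := staircase_bounds N0 (V01 x); have /andP[v0 v1] := V01 x.
by rewrite ger0_norm ?subr_ge0 //; lra.
Qed.

Lemma Rintegral_staircase_error_ge N : (0 < N)%N ->
  - (\int[mu]_(x in A) `|Z x| / N%:R) <= \int[mu]_(x in A) ((V x - staircase N (V x)) * Z x).
Proof.
move=> N0; rewrite [_ / _]mulrC -mulNr -RintegralZl //; last exact: integrable_norm.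
apply: le_Rintegral => //.
- apply: integrable_bounded_mul mA (measurable_cst _) _ (integrable_norm iZ) => x.
  by rewrite normrN ger0_norm ?invr_ge0 // invf_le1 ?ler1n ?ltr0n.
- exact: integrable_staircase_error_mul.
move=> x _; have [/andP[_ sv] vs] := staircase_bounds N0 (V01 x).
have e0 : 0 <= V x - staircase N (V x) by rewrite subr_ge0.
have eN : V x - staircase N (V x) <= N%:R^-1 by rewrite lerBlDl -lerBlDr.
have Z1 := ler_norm (Z x); have Z2 : - `|Z x| <= Z x by rewrite lerNl -normrN ler_norm.
nra.
Qed.

Lemma Rintegral_mul_superlevel_ge0 : 0 <= \int[mu]_(x in A) (V x * Z x).
Proof.
apply: (@ge0_of_ge_oppr_divSn _ (\int[mu]_(x in A) `|Z x|)) => N.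
have -> : \int[mu]_(x in A) (V x * Z x) = \int[mu]_(x in A) (staircase N.+1 (V x) * Z x)
    + \int[mu]_(x in A) ((V x - staircase N.+1 (V x)) * Z x).
  rewrite -RintegralD ?integrable_staircase_mul ?integrable_staircase_error_mul //.
  by apply: eq_Rintegral => x _; ring.
rewrite -[X in X <= _]add0r; apply: lerD; first exact: Rintegral_staircase_mul_ge0.
exact: Rintegral_staircase_error_ge.
Qed.

End superlevel_sets.

Section partial_norms.
Context d (T : measurableType d) (R : realType) (P : probability T R) (n : nat)
  (X : nat -> T -> R).
Hypothesis mX : forall k, (1 <= k <= n)%N -> measurable_fun setT (X k).
Hypothesis iX : forall k, (1 <= k <= n)%N -> P.-integrable setT (EFin \o X k).

Let fine_probability_setT : fine (P setT) = 1.
Proof. by rewrite probability_setT. Qed.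

Definition partial_norm k x := Num.sqrt (\sum_(1 <= j < k.+1) X j x ^+ 2).

Definition step_norm k x := hypot (X k x) (lam P X k.-1).

Lemma step_normS k x : step_norm k.+1 x = hypot (X k.+1 x) (lam P X k).
Proof. by []. Qed.

Lemma partial_norm_ge0 k x : 0 <= partial_norm k x.
Proof. exact: sqrtr_ge0. Qed.

Lemma partial_norm0 x : partial_norm 0 x = 0.
Proof. by rewrite /partial_norm big_geq ?sqrtr0. Qed.

Lemma partial_normS k x : partial_norm k.+1 x = hypot (X k.+1 x) (partial_norm k x).
Proof.
rewrite /hypot /partial_norm big_nat_recr //= sqr_sqrtr; first by rewrite addrC.
by apply: sumr_ge0 => j _; exact: sqr_ge0.
Qed.

Lemma measurable_partial_norm k : (k <= n)%N -> measurable_fun setT (partial_norm k).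
Proof.
elim: k => [_|k IH kn].
  by rewrite (funext partial_norm0); exact: measurable_cst.
rewrite (funext (partial_normS k)).
by apply: measurable_hypot; [apply: mX; rewrite kn | exact: IH (ltnW kn)].
Qed.

Lemma lam_ge0 k : 0 <= lam P X k.
Proof. by case: k => // k; apply: Rintegral_ge0 => x _; exact: hypot_ge0. Qed.

Lemma lam_le_step_norm k x : lam P X k.-1 <= step_norm k x.
Proof. exact/ler_hypotr/lam_ge0. Qed.

Lemma integrable_step_norm k : (1 <= k <= n)%N -> P.-integrable setT (EFin \o step_norm k).
Proof.
move=> kn; set l := lam P X k.-1.
have := integrableD measurableT (integrable_norm (iX kn)) (finite_measure_integrable_cst P l measurableT).
apply: le_integrable => //.
  by apply/measurable_EFinP; exact: measurable_hypot (mX kn) (measurable_cst _).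
move=> x _; rewrite /= lee_fin ger0_norm ?hypot_ge0 // ger0_norm ?addr_ge0 ?lam_ge0 //.
have := hypot_le_addr (X k x) (lam_ge0 k.-1) (lexx 0) (lam_ge0 k.-1).
by rewrite add0r /hypot expr0n addr0 sqrtr_sqr; apply.
Qed.

Lemma lam_leS k : (k < n)%N -> lam P X k <= lam P X k.+1.
Proof.
move=> kn; rewrite -[leLHS]mulr1 -fine_probability_setT -Rintegral_cst //.
apply: le_Rintegral => //; first exact: finite_measure_integrable_cst.
  by apply: integrable_step_norm; rewrite kn.
by move=> x _; exact: lam_le_step_norm k.+1 x.
Qed.

Definition excess k x := \sum_(j < k) (step_norm j.+1 x - lam P X j).

Lemma excessS k x : excess k.+1 x = excess k x + (step_norm k.+1 x - lam P X k).
Proof. by rewrite /excess big_ord_recr. Qed.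

Lemma excess_ge0 k x : 0 <= excess k x.
Proof. by apply: sumr_ge0 => j _; rewrite subr_ge0 (lam_le_step_norm j.+1). Qed.

Lemma partial_norm_le_lam_excess k x : (k <= n)%N ->
  partial_norm k x <= lam P X k + excess k x.
Proof.
elim: k => [_|k IH kn]; first by rewrite partial_norm0 /excess big_ord0 addr0.
have := hypot_le_addr (X k.+1 x) (partial_norm_ge0 k x) (lam_ge0 k) (excess_ge0 k x) (IH (ltnW kn)).
rewrite -partial_normS -step_normS excessS.
have := lam_leS kn; lra.
Qed.

Lemma integrable_excess k : (k <= n)%N -> P.-integrable setT (EFin \o excess k).
Proof.
move=> kn; apply: integrable_sumr => // j; apply: integrableB_cst => //.
by apply: integrable_step_norm; rewrite /= (leq_trans (ltn_ord j)).
Qed.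

Lemma Rintegral_excess k : (k <= n)%N -> \int[P]_x excess k x = lam P X k.
Proof.
move=> kn; rewrite Rintegral_sum //; last first.
  move=> j; apply: integrableB_cst => //.
  by apply: integrable_step_norm; rewrite /= (leq_trans (ltn_ord j)).
under eq_bigr => j _.
  rewrite Rintegral_subr_cst //; last first.
    by apply: integrable_step_norm; rewrite /= (leq_trans (ltn_ord j)).
  rewrite fine_probability_setT mulr1.
over.
by rewrite -(big_mkord xpredT (fun j => lam P X j.+1 - lam P X j)) telescope_sumr // subr0.
Qed.

Lemma integrable_partial_norm k : (k <= n)%N -> P.-integrable setT (EFin \o partial_norm k).
Proof.
move=> kn; have := integrable_add measurableT
  (finite_measure_integrable_cst P (lam P X k) measurableT) (integrable_excess kn).
apply: le_integrable => //; first exact/measurable_EFinP/measurable_partial_norm.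
move=> x _; rewrite /= lee_fin ger0_norm ?partial_norm_ge0 //.
by rewrite ger0_norm ?addr_ge0 ?lam_ge0 ?excess_ge0 // partial_norm_le_lam_excess.
Qed.

Lemma Rintegral_partial_norm_le : \int[P]_x partial_norm n x <= 2 * lam P X n.
Proof.
apply: (@le_trans _ _ (\int[P]_x (lam P X n + excess n x))).
  apply: le_Rintegral => //; first exact: integrable_partial_norm.
    apply: integrable_add => //; last exact: integrable_excess.
    exact: finite_measure_integrable_cst.
  by move=> x _; exact: partial_norm_le_lam_excess.
rewrite RintegralD //; last exact: integrable_excess.
  by rewrite Rintegral_cst // Rintegral_excess // fine_probability_setT mulr1; lra.
exact: finite_measure_integrable_cst.
Qed.

Hypothesis indX : mutually_independent P n X.

Definition cylinder (J : seq nat) (B : nat -> set R) : set T :=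
  \big[setI/setT]_(j <- J) (X j @^-1` B j).

Definition later_indices k (J : seq nat) := uniq J && all (fun j => k < j <= n)%N J.

Lemma later_indices0 k J : later_indices k J -> later_indices 0 J.
Proof.
move=> /andP[uJ /allP aJ]; rewrite /later_indices uJ; apply/allP => j /aJ /andP[kj ->].
by rewrite (leq_ltn_trans _ kj).
Qed.

Lemma later_indices_cons k J : (k < n)%N -> later_indices k.+1 J ->
  later_indices k (k.+1 :: J).
Proof.
move=> kn /andP[uJ aJ]; rewrite /later_indices /= ltnSn kn uJ andbT /=.
apply/andP; split; first by apply/negP => /(allP aJ); rewrite ltnn.
by apply/allP => j /(allP aJ) /andP[kj ->]; rewrite ltnW.
Qed.

Lemma measurable_cylinder k J B : later_indices k J -> (forall j, measurable (B j)) ->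
  measurable (cylinder J B).
Proof.
move=> /later_indices0 /andP[_ aJ] mB; rewrite /cylinder big_seq; apply: big_ind => //.
  exact: measurableI.
by move=> j /(allP aJ) jn; rewrite -[X in measurable X]setTI; exact: mX.
Qed.

Lemma probability_cylinder k J B : later_indices k J -> (forall j, measurable (B j)) ->
  P (cylinder J B) = (\prod_(j <- J) P (X j @^-1` B j))%E.
Proof. by move=> /later_indices0 /andP[uJ aJ] mB; exact: indX. Qed.

Lemma cylinder_setI_update k J B B0 : k \notin J ->
  cylinder J B `&` X k @^-1` B0 = cylinder (k :: J) (fun j => if j == k then B0 else B j).
Proof.
move=> kJ; rewrite /cylinder big_cons eqxx setIC; congr (_ `&` _).
by apply: eq_big_seq => j jJ; rewrite ifN ?(memPn kJ).
Qed.

Lemma probability_cylinder_setI k J B B0 : (k < n)%N -> later_indices k.+1 J ->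
  (forall j, measurable (B j)) -> measurable B0 ->
  P (cylinder J B `&` X k.+1 @^-1` B0) = (P (cylinder J B) * P (X k.+1 @^-1` B0))%E.
Proof.
move=> kn lJ mB mB0; have lkJ := later_indices_cons kn lJ; have /andP[/andP[kJ _] _] := lkJ.
set B' := fun j => if j == k.+1 then B0 else B j.
have mB' j : measurable (B' j) by rewrite /B'; case: eqP.
rewrite cylinder_setI_update // (probability_cylinder lkJ mB') big_cons {1}/B' eqxx muleC.
rewrite (probability_cylinder lJ mB); congr (_ * _)%E.
by apply: eq_big_seq => j jJ; rewrite /B' ifN ?(memPn kJ).
Qed.

Lemma Rintegral_cylinder_step_norm k J B : (k < n)%N -> later_indices k.+1 J ->
  (forall j, measurable (B j)) ->
  \int[P]_(x in cylinder J B) step_norm k.+1 x = fine (P (cylinder J B)) * lam P X k.+1.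
Proof.
move=> kn lJ mB; have mA := measurable_cylinder lJ mB.
have k1 : (1 <= k.+1 <= n)%N by rewrite kn.
have mh : measurable_fun setT (fun y : R => (hypot y (lam P X k))%:E).
  apply/measurable_EFinP.
  exact: (measurable_hypot (f := fun y : R => y) (@measurable_id _ R setT) (measurable_cst _)).
have := ge0_integral_indep_event mA (mX k1)
  (fun B0 mB0 => probability_cylinder_setI kn lJ mB mB0) mh (fun y => hypot_ge0 _ _).
rewrite /Rintegral => ->; rewrite fineM //; first exact: fin_num_measure.
exact: integrable_fin_num (integrable_step_norm k1).
Qed.

Definition tangent_slope k y := lam P X k / hypot y (lam P X k).

Lemma tangent_slope_itv k y : 0 <= tangent_slope k y <= 1.
Proof. by rewrite hypot_slope_ge0 ?hypot_slope_le1 ?lam_ge0. Qed.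

Lemma measurable_tangent_slope k : (k < n)%N ->
  measurable_fun setT (fun x => tangent_slope k (X k.+1 x)).
Proof. by move=> kn; apply: measurableT_comp (measurable_hypot_slope _) (mX _); rewrite kn. Qed.

Lemma integrable_partial_norm_subr k A : (k <= n)%N -> measurable A ->
  P.-integrable A (EFin \o (fun x => partial_norm k x - lam P X k)).
Proof.
move=> kn mA; apply: integrableB_cst => //.
exact: integrableS measurableT mA _ (integrable_partial_norm kn).
Qed.

Lemma Rintegral_cylinder_slope_ge0 k J B : (k < n)%N -> later_indices k.+1 J ->
  (forall j, measurable (B j)) ->
  (forall J' B', later_indices k J' -> (forall j, measurable (B' j)) ->
     lam P X k * fine (P (cylinder J' B')) <= \int[P]_(x in cylinder J' B') partial_norm k x) ->
  0 <= \int[P]_(x in cylinder J B)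
         (tangent_slope k (X k.+1 x) * (partial_norm k x - lam P X k)).
Proof.
move=> kn lJ mB IH; have mA := measurable_cylinder lJ mB.
apply: (Rintegral_mul_superlevel_ge0 mA (measurable_tangent_slope kn)) => [x||t].
- exact: tangent_slope_itv.
- exact: integrable_partial_norm_subr (ltnW kn) mA.
set B0 := [set y | t <= tangent_slope k y].
have mB0 : measurable B0 := measurable_superlevel (measurable_hypot_slope _) t.
have /andP[/andP[kJ _] _] := later_indices_cons kn lJ.
set B' := fun j => if j == k.+1 then B0 else B j.
have mB' j : measurable (B' j) by rewrite /B'; case: eqP.
have -> : cylinder J B `&` [set x | t <= tangent_slope k (X k.+1 x)] = cylinder (k.+1 :: J) B'
  := cylinder_setI_update B B0 kJ.
have lkJ := later_indices_cons kn lJ; have mA' := measurable_cylinder lkJ mB'.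
rewrite Rintegral_subr_cst // ?subr_ge0 ?IH //.
by apply: integrableS measurableT mA' _ _ => //; exact: integrable_partial_norm (ltnW kn).
Qed.

Lemma lam_mul_le_Rintegral_cylinder k J B : (k <= n)%N -> later_indices k J ->
  (forall j, measurable (B j)) ->
  lam P X k * fine (P (cylinder J B)) <= \int[P]_(x in cylinder J B) partial_norm k x.
Proof.
elim: k J B => [|k IH] J B kn lJ mB.
  by rewrite mul0r; apply: Rintegral_ge0 => x _; exact: partial_norm_ge0.
have mA := measurable_cylinder lJ mB; set A := cylinder J B.
have k1 : (1 <= k.+1 <= n)%N by rewrite kn.
set V := fun x => tangent_slope k (X k.+1 x).
set Z := fun x => partial_norm k x - lam P X k.
have iS : P.-integrable A (EFin \o step_norm k.+1).
  exact: integrableS measurableT mA _ (integrable_step_norm k1).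
have iVZ : P.-integrable A (EFin \o (fun x => V x * Z x)).
  apply: integrable_bounded_mul mA (measurable_tangent_slope kn) _
    (integrable_partial_norm_subr (ltnW kn) mA) => x.
  by have /andP[V0 V1] := tangent_slope_itv k (X k.+1 x); rewrite ger0_norm.
have tangent_le x : step_norm k.+1 x + V x * Z x <= partial_norm k.+1 x.
  by rewrite partial_normS; exact: hypot_tangent (lam_ge0 k) (partial_norm_ge0 k x).
rewrite mulrC -Rintegral_cylinder_step_norm //.
apply: (@le_trans _ _ (\int[P]_(x in A) (step_norm k.+1 x + V x * Z x))).
  rewrite RintegralD // lerDl; apply: Rintegral_cylinder_slope_ge0 => // J' B'.
  exact: IH (ltnW kn).
apply: le_Rintegral => //; first exact: integrable_add.
exact: integrableS measurableT mA _ (integrable_partial_norm kn).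
Qed.

End partial_norms.

Theorem corollary6p2 (d : measure_display) (T : measurableType d) (R : realType)
  (P : probability T R) (n : nat) (X : nat -> T -> R)
  (mX : forall k, (1 <= k <= n)%N -> measurable_fun setT (X k))
  (iX : forall k, (1 <= k <= n)%N -> P.-integrable setT (EFin \o X k))
  (indX : mutually_independent P n X) :
  ((lam P X n)%:E <= \int[P]_x (Num.sqrt (\sum_(1 <= k < n.+1) X k x ^+ 2))%:E)%E /\
  (\int[P]_x (Num.sqrt (\sum_(1 <= k < n.+1) X k x ^+ 2))%:E <= (2 * lam P X n)%:E)%E.
Proof.
have iY := integrable_partial_norm mX iX (leqnn n).
have -> : (\int[P]_x (partial_norm X n x)%:E = (\int[P]_x partial_norm X n x)%:E)%E.
  by rewrite fineK // (integrable_fin_num _ iY).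
rewrite !lee_fin.
split; last exact: Rintegral_partial_norm_le.
have := lam_mul_le_Rintegral_cylinder mX iX indX (J := [::]) (B := fun=> setT) (leqnn n) isT
  (fun=> measurableT).
by rewrite /cylinder big_nil probability_setT mulr1.
Qed.
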